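(* Suppose $g\in\mathcal R_n^f(\{y\},Z,k)$ for some $y\in Y$ and $k\ge1$, and suppose either (a) $X$ and $Y$ are metric spaces and $Z\subset M$ is closed, or (b) $Z=M$ and $X,Y$ are paracompact. Then there exist a neighborhood $V_y$ of $y$ in $Y$ and $\delta_y>0$ such that $g'\in\mathcal R_n^f(\{y'\},Z,k)$ whenever $y'\in V_y$ and $g'\in C(X,M)$ satisfies $\rho(g'(x),g(x))<\delta_y$ for all $x\in f^{-1}(y')$.
   Context: Let $(M,\rho)$ be a complete metric space, $Z\subset M$ closed, $n\ge0$, and $f\colon X\to Y$ a perfect surjection with $\dim f\le n$. For $H\subset Y$ and $k\ge1$, $\mathcal R_n^f(H,Z,k)$ is the set of $g\in C(X,M)$ such that for each $y\in H$ the set $g(f^{-1}(y))\cap Z$ can be covered by a family of open subsets of $M$ of mesh $\le1/k$ and order $\le n$ (every point of $M$ lies in at most $n+1$ members of the family). *)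

From Stdlib Require Import Reals List.
Open Scope R_scope.

Record TopSpace := {
  tpt :> Type;
  is_open : (tpt -> Prop) -> Prop;
  open_full : is_open (fun _ => True);
  open_inter : forall U V, is_open U -> is_open V -> is_open (fun x => U x /\ V x);
  open_union : forall F : (tpt -> Prop) -> Prop,
      (forall U, F U -> is_open U) -> is_open (fun x => exists U, F U /\ U x)
}.

Definition is_closed (X : TopSpace) (C : X -> Prop) : Prop :=
  is_open X (fun x => ~ C x).

Definition hausdorff (X : TopSpace) : Prop :=
  forall a b : X, a <> b -> exists U V, is_open X U /\ is_open X V /\ U a /\ V b /\
    (forall z, U z -> V z -> False).

Definition compact_set (X : TopSpace) (K : X -> Prop) : Prop :=
  forall F : (X -> Prop) -> Prop,
    (forall U, F U -> is_open X U) ->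
    (forall x, K x -> exists U, F U /\ U x) ->
    exists l : list (X -> Prop), (forall U, In U l -> F U) /\
      (forall x, K x -> exists U, In U l /\ U x).

Definition paracompact (X : TopSpace) : Prop :=
  hausdorff X /\
  forall F : (X -> Prop) -> Prop,
    (forall U, F U -> is_open X U) ->
    (forall x, exists U, F U /\ U x) ->
    exists G : (X -> Prop) -> Prop,
      (forall V, G V -> is_open X V) /\
      (forall x, exists V, G V /\ V x) /\
      (forall V, G V -> exists U, F U /\ forall x, V x -> U x) /\
      (forall x, exists W, is_open X W /\ W x /\
         exists l : list (X -> Prop),
           forall V, G V -> (exists z, W z /\ V z) -> In V l).

(* Covering (Cech-Lebesgue) dimension of the subspace A of X is <= n:
   every finite cover of A by open sets has a finite open refinement
   (relative to A) covering A of order <= n. *)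
Definition dim_le (X : TopSpace) (A : X -> Prop) (n : nat) : Prop :=
  forall l : list (X -> Prop),
    (forall U, In U l -> is_open X U) ->
    (forall x, A x -> exists U, In U l /\ U x) ->
    exists l' : list (X -> Prop),
      (forall V, In V l' -> is_open X V) /\
      (forall x, A x -> exists V, In V l' /\ V x) /\
      (forall V, In V l' -> exists U, In U l /\ forall x, A x -> V x -> U x) /\
      (forall x, A x ->
         forall idx : list nat, NoDup idx ->
           (forall i, In i idx -> exists V, nth_error l' i = Some V /\ V x) ->
           (length idx <= S n)%nat).

Definition continuous (X Y : TopSpace) (f : X -> Y) : Prop :=
  forall U, is_open Y U -> is_open X (fun x => U (f x)).

Definition closed_map (X Y : TopSpace) (f : X -> Y) : Prop :=
  forall C, is_closed X C -> is_closed Y (fun y => exists x, C x /\ f x = y).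

Definition perfect (X Y : TopSpace) (f : X -> Y) : Prop :=
  hausdorff X /\ continuous X Y f /\ closed_map X Y f /\
  forall y, compact_set X (fun x => f x = y).

Definition surjective {A B} (f : A -> B) : Prop := forall b, exists a, f a = b.

Definition dim_map_le (X Y : TopSpace) (f : X -> Y) (n : nat) : Prop :=
  forall y, dim_le X (fun x => f x = y) n.

Definition is_metric {T : Type} (d : T -> T -> R) : Prop :=
  (forall x, d x x = 0) /\ (forall x y, d x y = 0 -> x = y) /\
  (forall x y, d x y = d y x) /\ (forall x y z, d x z <= d x y + d y z).

Definition metric_open {T : Type} (d : T -> T -> R) (U : T -> Prop) : Prop :=
  forall x, U x -> exists e, 0 < e /\ forall y, d x y < e -> U y.

Definition complete_metric {T : Type} (d : T -> T -> R) : Prop :=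
  forall u : nat -> T,
    (forall e, 0 < e -> exists N, forall p q, (N <= p)%nat -> (N <= q)%nat -> d (u p) (u q) < e) ->
    exists l, forall e, 0 < e -> exists N, forall p, (N <= p)%nat -> d (u p) l < e.

Definition metrizable (X : TopSpace) : Prop :=
  exists d : X -> X -> R, is_metric d /\ forall U, is_open X U <-> metric_open d U.

Definition cont_to_metric (X : TopSpace) {M : Type} (rho : M -> M -> R) (g : X -> M) : Prop :=
  forall U, metric_open rho U -> is_open X (fun x => U (g x)).

Definition good_family {M : Type} (rho : M -> M -> R) (F : (M -> Prop) -> Prop)
    (eps : R) (n : nat) : Prop :=
  (forall U, F U -> metric_open rho U) /\
  (forall U, F U -> forall a b, U a -> U b -> rho a b <= eps) /\
  (forall p, forall l : list (M -> Prop), NoDup l ->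
       (forall U, In U l -> F U /\ U p) -> (length l <= S n)%nat).

Definition Rnf (X Y : TopSpace) (f : X -> Y) {M : Type} (rho : M -> M -> R)
    (n : nat) (H : Y -> Prop) (Z : M -> Prop) (k : nat) (g : X -> M) : Prop :=
  cont_to_metric X rho g /\
  forall y, H y -> exists F : (M -> Prop) -> Prop,
    good_family rho F (1 / INR k) n /\
    forall x, f x = y -> Z (g x) -> exists U, F U /\ U (g x).

From Stdlib Require Import Reals List Lra Classical FunctionalExtensionality PropExtensionality.
Open Scope R_scope.

(* The open set [O] of [M] covered by the family [F] together with the complement
   of [Z] contains the compact image [g(f^-1(y))], so a Lebesgue-number argument
   gives [delta > 0] and an open [A ⊇ f^-1(y)] such that every point [delta]-close
   to [g(A)] lies in [O].  Since [f] is closed, the fibres over some neighbourhood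
   [V] of [y] stay inside [A]; hence for [y' ∈ V] and [g'] [delta]-close to [g] on
   [f^-1(y')], the same family [F] still covers [g'(f^-1(y')) ∩ Z]. *)

Lemma metric_open_ball {M : Type} (rho : M -> M -> R) (p : M) (e : R) :
  is_metric rho -> metric_open rho (fun q => rho p q < e).
Proof.
  intros [_ [_ [_ Htri]]] q Hq.
  exists (e - rho p q); split; [lra|].
  intros r Hr; specialize (Htri p q r); lra.
Qed.

Lemma is_closed_compl (X : TopSpace) (A : X -> Prop) :
  is_open X A -> is_closed X (fun x => ~ A x).
Proof.
  unfold is_closed; intros HA.
  replace (fun x => ~ ~ A x) with A; [exact HA|].
  apply functional_extensionality; intro x; apply propositional_extensionality.
  split; [tauto | apply NNPP].
Qed.

Lemma closed_map_fiber_nbhd (X Y : TopSpace) (f : X -> Y) (A : X -> Prop) (y : Y) :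
  closed_map X Y f -> is_open X A -> (forall x, f x = y -> A x) ->
  exists V : Y -> Prop, is_open Y V /\ V y /\ forall x, V (f x) -> A x.
Proof.
  intros Hf HA Hfib.
  exists (fun y0 => ~ exists x, ~ A x /\ f x = y0); split; [|split].
  - exact (Hf _ (is_closed_compl X A HA)).
  - intros [x [HnA Hx]]; exact (HnA (Hfib x Hx)).
  - intros x HV; apply NNPP; intro HnA; apply HV; now exists x.
Qed.

Lemma list_common_pos_radius {A : Type} (P : A -> R -> Prop) (l : list A) :
  (forall a d d', 0 < d' <= d -> P a d -> P a d') ->
  (forall a, In a l -> exists e, 0 < e /\ P a e) ->
  exists d, 0 < d /\ forall a, In a l -> P a d.
Proof.
  intros Hmono; induction l as [|a l IH]; intros Hl.
  - exists 1; split; [lra | intros _ []].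
  - destruct IH as [d [Hd Hdl]]; [intros; apply Hl; now right|].
    destruct (Hl a (or_introl eq_refl)) as [e [He Hae]].
    exists (Rmin d e); split; [now apply Rmin_pos|].
    pose proof (Rmin_l d e); pose proof (Rmin_r d e); pose proof (Rmin_pos d e Hd He).
    intros b [<- | Hb].
    + apply (Hmono a e); [lra | exact Hae].
    + apply (Hmono b d); [lra | exact (Hdl b Hb)].
Qed.

Lemma compact_image_uniform_nbhd (X : TopSpace) {M : Type} (rho : M -> M -> R)
    (g : X -> M) (K : X -> Prop) (O : M -> Prop) :
  is_metric rho -> cont_to_metric X rho g -> compact_set X K ->
  metric_open rho O -> (forall x, K x -> O (g x)) ->
  exists (A : X -> Prop) (delta : R), is_open X A /\ (forall x, K x -> A x) /\
    0 < delta /\ forall x q, A x -> rho (g x) q < delta -> O q.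
Proof.
  intros Hmet Hg HK HO HKO.
  pose proof Hmet as [Hrefl [_ [_ Htri]]].
  set (Fam := fun B : X -> Prop => exists p e, 0 < e /\
          (forall q, rho p q < 2 * e -> O q) /\ B = (fun z => rho p (g z) < e)).
  assert (HFam_open : forall B, Fam B -> is_open X B).
  { intros B [p [e [_ [_ ->]]]]; apply (Hg (fun q => rho p q < e)), metric_open_ball, Hmet. }
  destruct (HK Fam HFam_open) as [l [HlFam HlK]].
  { intros x Hx.
    destruct (HO (g x) (HKO x Hx)) as [e [He Hball]].
    exists (fun z => rho (g x) (g z) < e / 2); split.
    - exists (g x), (e / 2); split; [lra | split; [|reflexivity]].
      intros q Hq; apply Hball; lra.
    - rewrite Hrefl; lra. }
  destruct (list_common_pos_radius
              (fun B d => forall z q, B z -> rho (g z) q < d -> O q) l)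
    as [delta [Hdelta Hl]].
  { intros B d d' Hd' HB z q Hz Hq; apply (HB z q Hz); lra. }
  { intros B HB; destruct (HlFam B HB) as [p [e [He [Hball ->]]]].
    exists e; split; [exact He|].
    intros z q Hz Hq; apply Hball; specialize (Htri p (g z) q); lra. }
  exists (fun z => exists B, In B l /\ B z), delta; repeat split.
  - apply (open_union X (fun B => In B l)); intros B HB; exact (HFam_open B (HlFam B HB)).
  - exact HlK.
  - exact Hdelta.
  - intros x q [B [HB Hx]]; exact (Hl B HB x q Hx).
Qed.

Lemma covered_or_outside_open {M : Type} (rho : M -> M -> R) (F : (M -> Prop) -> Prop)
    (Z : M -> Prop) :
  (forall U, F U -> metric_open rho U) -> metric_open rho (fun p => ~ Z p) ->
  metric_open rho (fun q => (exists U, F U /\ U q) \/ ~ Z q).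
Proof.
  intros HF HZ q [[U [HU Hq]] | Hq].
  - destruct (HF U HU q Hq) as [e [He Hball]].
    exists e; split; [exact He|]; intros r Hr; left; exists U; auto.
  - destruct (HZ q Hq) as [e [He Hball]].
    exists e; split; [exact He|]; intros r Hr; right; auto.
Qed.

Theorem lemma2p2
  (M : Type) (rho : M -> M -> R) (Hmet : is_metric rho) (Hcompl : complete_metric rho)
  (Z : M -> Prop) (HZ : metric_open rho (fun p => ~ Z p))
  (n : nat) (X Y : TopSpace) (f : X -> Y)
  (Hperf : perfect X Y f) (Hsurj : surjective f) (Hdim : dim_map_le X Y f n)
  (y : Y) (k : nat) (Hk : (1 <= k)%nat) (g : X -> M)
  (Hg : Rnf X Y f rho n (fun y0 => y0 = y) Z k g)
  (Hcase : (metrizable X /\ metrizable Y)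
           \/ ((forall p, Z p) /\ paracompact X /\ paracompact Y)) :
  exists V : Y -> Prop, is_open Y V /\ V y /\
  exists delta : R, 0 < delta /\
    forall (y' : Y) (g' : X -> M), V y' ->
      cont_to_metric X rho g' ->
      (forall x, f x = y' -> rho (g' x) (g x) < delta) ->
      Rnf X Y f rho n (fun y0 => y0 = y') Z k g'.
Proof.
  destruct Hperf as [_ [_ [Hclosed Hcompact]]].
  destruct Hg as [Hgc Hg]; destruct (Hg y eq_refl) as [F [Hgood HFcov]].
  pose proof Hmet as [_ [_ [Hsym _]]].
  set (O := fun q => (exists U, F U /\ U q) \/ ~ Z q).
  destruct (compact_image_uniform_nbhd X rho g (fun x => f x = y) O)
    as [A [delta [HA [HyA [Hdelta HAO]]]]]; auto.
  { destruct Hgood as [HFopen _]; exact (covered_or_outside_open rho F Z HFopen HZ). }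
  { intros x Hx; destruct (classic (Z (g x))) as [Hz | Hz];
      [left; exact (HFcov x Hx Hz) | now right]. }
  destruct (closed_map_fiber_nbhd X Y f A y Hclosed HA HyA) as [V [HV [Hy HVA]]].
  exists V; repeat split; auto; exists delta; split; [exact Hdelta|].
  intros y' g' Hy' Hg'c Hclose; split; [exact Hg'c|].
  intros y0 ->; exists F; split; [exact Hgood|].
  intros x Hx HZx.
  assert (HAx : A x) by (apply HVA; rewrite Hx; exact Hy').
  assert (Hx_near : rho (g x) (g' x) < delta) by (rewrite Hsym; exact (Hclose x Hx)).
  destruct (HAO x (g' x) HAx Hx_near) as [Hcov | HnZ]; [exact Hcov | contradiction].
Qed.
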